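(* Let $k:\mathbb{R}_+\to\mathbb{R}_+$ be a non-increasing positive function, let $\sigma>0$ and $\delta\in(0,0.5]$. Let $P=\{p_1,\dots,p_N\}\subset\mathbb{R}$ be a univariate data set and let $\Delta=[a,b]$ with $a<b$. Suppose $|P\cap\Delta|\ge 2$, $a\ge\min P$ and $b\le\max P$. Define $\Delta'=[a',b']$ with $a'=(a+\min(P\cap\Delta))/2$ and $b'=(b+\max(P\cap\Delta))/2$, and let $M=\max_{x\in\Delta'}\min_{i=1,\dots,N}|x-p_i|$. Let $L(P)$ be the standard graph Laplacian of the graph on vertices $P$ with similarities $s(P,i,j)=k(|T_\Delta(p_i)-T_\Delta(p_j)|/\sigma)$. Then $$\lambda_2(L(P))\ge \frac{1}{|P|^3}\,k\!\left(\frac{2M+\delta C}{\sigma}\right),$$ where $C=\max\{D,D^{1-\delta}\}$ and $D=\max\{a-\min P,\ \max P-b\}$.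
   Context: For an interval $\Delta=[a,b]$ and $\delta\in(0,0.5]$, $T_\Delta:\mathbb{R}\to\mathbb{R}$ is defined by $T_\Delta(z)=-\delta\big(a-z+(\delta(1-\delta))^{1/\delta}\big)^{1-\delta}+\delta(\delta(1-\delta))^{(1-\delta)/\delta}$ for $z<a$; $T_\Delta(z)=z-a$ for $a\le z\le b$; $T_\Delta(z)=\delta\big(z-b+(\delta(1-\delta))^{1/\delta}\big)^{1-\delta}-\delta(\delta(1-\delta))^{(1-\delta)/\delta}+(b-a)$ for $z>b$. For an affinity matrix $A$ with degree matrix $D=\mathrm{diag}(\sum_jA_{ij})$, the standard Laplacian is $D-A$. $\lambda_2(\cdot)$ is the second smallest eigenvalue; $|P|=N$. *)

From HB Require Import structures.
From mathcomp Require Import all_boot all_order all_algebra.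
From mathcomp Require Import classical_sets reals exp.
Set Implicit Arguments. Unset Strict Implicit. Unset Printing Implicit Defensive.
Import Order.TTheory GRing.Theory Num.Theory.
Local Open Scope ring_scope.

Section Defs.
Variable R : realType.

Definition seqmin (s : seq R) : R := foldr Num.min (head 0 s) s.
Definition seqmax (s : seq R) : R := foldr Num.max (head 0 s) s.

Definition T_Delta (delta a b : R) (z : R) : R :=
  let c  := powR (delta * (1 - delta)) (1 / delta) in
  let c2 := powR (delta * (1 - delta)) ((1 - delta) / delta) in
  if z < a then - delta * powR (a - z + c) (1 - delta) + delta * c2
  else if z <= b then z - a
  else delta * powR (z - b + c) (1 - delta) - delta * c2 + (b - a).

Definition laplacian (n : nat) (A : 'M[R]_n) : 'M[R]_n :=
  diag_mx (\row_i \sum_j A i j) - A.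

Definition affinity (k : R -> R) (sigma delta a b : R) (P : seq R)
  : 'M[R]_(size P) :=
  \matrix_(i < size P, j < size P)
     k (`|T_Delta delta a b P`_i - T_Delta delta a b P`_j| / sigma).

(* eigenvalues of a square matrix, listed with algebraic multiplicity in
   nondecreasing order: the char. polynomial splits with these roots *)
Definition sorted_eigenvalues (n : nat) (L : 'M[R]_n) (s : seq R) : Prop :=
  sorted <=%R s /\ char_poly L = \prod_(x <- s) ('X - x%:P).

End Defs.

(* Write T_Delta z = clamp z - a + tail (z - b)_+ - tail (a - z)_+
   with tail t = delta ((t + c)^(1-delta) - c^(1-delta)), a nondecreasing
   function vanishing at 0 with tail t <= delta t^(1-delta) by subadditivity of
   t^(1-delta).  For consecutive data points x <= y, at most one tail
   contributes to T y - T x, by at most delta D^(1-delta) <= delta C, while the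
   clamped gap is at most 2 M: the midpoint of the clamped pair lies in Delta'
   and no data point lies strictly between x and y.  Hence the path through the
   sorted data has similarities >= w := k ((2 M + delta C) / sigma).
   For any graph with such a Hamiltonian path, Cauchy-Schwarz along the path
   gives (w / n^3) sum_(i,j) (v_i - v_j)^2 <= sum_(i,j) W_ij (v_i - v_j)^2, so
   every eigenvalue of L + (mu / n) J is >= mu := w / n^3 (J the all-ones
   matrix).  Since X * chi(L + (mu / n) J) = (X - mu) * chi(L), at most one
   eigenvalue of L, namely 0, lies below mu. *)

From HB Require Import structures.
From mathcomp Require Import all_boot all_order all_algebra.
From mathcomp Require Import classical_sets reals exp.
From mathcomp Require Import ring lra zify.
Import Order.TTheory GRing.Theory Num.Theory.
Local Open Scope ring_scope.

Section SeqMinMax.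
Context {R : realType}.
Implicit Types (s : seq R) (e z : R).

Lemma foldr_min_le s e z : z \in s -> foldr Num.min e s <= z.
Proof.
elim: s => //= x s IH; rewrite in_cons => /orP[/eqP->|/IH zs].
  by rewrite ge_min lexx.
by rewrite ge_min zs orbT.
Qed.

Lemma foldr_max_ge s e z : z \in s -> z <= foldr Num.max e s.
Proof.
elim: s => //= x s IH; rewrite in_cons => /orP[/eqP->|/IH zs].
  by rewrite le_max lexx.
by rewrite le_max zs orbT.
Qed.

Lemma foldr_min_mem s e : foldr Num.min e s \in e :: s.
Proof.
elim: s => /= [|x s]; first by rewrite mem_head.
rewrite !in_cons /Num.min; case: ifP => _; first by rewrite eqxx orbT.
by case/orP=> ->; rewrite ?orbT.
Qed.

Lemma foldr_max_mem s e : foldr Num.max e s \in e :: s.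
Proof.
elim: s => /= [|x s]; first by rewrite mem_head.
rewrite !in_cons /Num.max; case: ifP => _; last by rewrite eqxx orbT.
by case/orP=> ->; rewrite ?orbT.
Qed.

Lemma seqmin_le s z : z \in s -> seqmin s <= z.
Proof. exact: foldr_min_le. Qed.

Lemma seqmax_ge s z : z \in s -> z <= seqmax s.
Proof. exact: foldr_max_ge. Qed.

Lemma seqmin_mem s : s != [::] -> seqmin s \in s.
Proof.
case: s => // x s _; have := foldr_min_mem (x :: s) x.
by rewrite /seqmin in_cons => /orP[/eqP->|]; rewrite ?mem_head.
Qed.

Lemma seqmax_mem s : s != [::] -> seqmax s \in s.
Proof.
case: s => // x s _; have := foldr_max_mem (x :: s) x.
by rewrite /seqmax in_cons => /orP[/eqP->|]; rewrite ?mem_head.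
Qed.

End SeqMinMax.

Lemma subadditive_powR (R : realType) (r u v : R) : 0 < r <= 1 ->
  0 <= u -> 0 <= v -> powR (u + v) r <= powR u r + powR v r.
Proof.
move=> /andP[r0 r1]; rewrite le_eqVlt => /predU1P[<-|u0].
  by rewrite add0r powR0 ?gt_eqF // add0r.
rewrite le_eqVlt => /predU1P[<-|v0].
  by rewrite addr0 powR0 ?gt_eqF // addr0.
set t := u + v; have t0 : 0 < t by rewrite addr_gt0.
(* [u / t] and [v / t] lie in (0, 1], where [powR _ r] can only increase. *)
have frac_le (x : R) : 0 < x <= t -> x / t <= powR (x / t) r.
  move=> /andP[x0 xt]; apply: ger1_powR => //.
  by rewrite divr_gt0 //= ler_pdivrMr // mul1r.
have uv_t : u / t + v / t = 1 by rewrite -mulrDl divff ?gt_eqF.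
have powR_frac (x : R) : 0 <= x -> powR x r = powR (x / t) r * powR t r.
  move=> x0; rewrite -powRM ?divfK ?gt_eqF ?(ltW t0) //.
  by rewrite divr_ge0 // ltW.
rewrite (powR_frac u (ltW u0)) (powR_frac v (ltW v0)) -mulrDl.
rewrite -[X in X <= _]mul1r -uv_t ler_wpM2r ?powR_ge0 //.
by apply: lerD; apply: frac_le; rewrite ?u0 ?v0 /t ?lerDl ?lerDr ltW.
Qed.

Definition clamp {R : realDomainType} (a b z : R) : R :=
  Num.min (Num.max z a) b.

Section Clamp.
Context {R : realDomainType} (a b : R).

Lemma clamp_ge z : a <= b -> a <= clamp a b z.
Proof. by move=> ab; rewrite /clamp le_min le_max lexx orbT ab. Qed.

Lemma clamp_le z : clamp a b z <= b.
Proof. by rewrite /clamp ge_min lexx orbT. Qed.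

Lemma nondecreasing_clamp : {homo clamp a b : x y / x <= y}.
Proof. by move=> x y xy; rewrite /clamp le_min2 ?le_max2. Qed.

Lemma le_clamp l z : l <= z -> l <= b -> l <= clamp a b z.
Proof. by move=> lz lb; rewrite /clamp le_min le_max lz lb. Qed.

Lemma ge_clamp h z : z <= h -> a <= h -> clamp a b z <= h.
Proof. by move=> zh ah; rewrite /clamp ge_min ge_max zh ah. Qed.

Lemma clamp_le_of_gt z : a < clamp a b z -> clamp a b z <= z.
Proof.
rewrite /clamp lt_min lt_max ltxx orbF => /andP[az _].
by rewrite ge_min ge_max lexx (ltW az).
Qed.

Lemma clamp_ge_of_lt z : clamp a b z < b -> z <= clamp a b z.
Proof.
rewrite /clamp gt_min ltxx orbF gt_max => /andP[zb _].
by rewrite le_min le_max lexx (ltW zb).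
Qed.

End Clamp.

Definition T_const {R : realType} (delta : R) : R :=
  powR (delta * (1 - delta)) (1 / delta).

Definition T_tail {R : realType} (delta t : R) : R :=
  delta * (powR (t + T_const delta) (1 - delta) -
           powR (T_const delta) (1 - delta)).

Section TransformDelta.
Context {R : realType} {delta : R}.
Hypothesis delta01 : 0 < delta < 1.

Let max0_ge0 (u : R) : 0 <= Num.max u 0.
Proof. by rewrite le_max lexx orbT. Qed.

Lemma T_tail0 : T_tail delta 0 = 0.
Proof. by rewrite /T_tail add0r subrr mulr0. Qed.

Lemma le_T_tail {s t : R} :
  0 <= s -> s <= t -> T_tail delta s <= T_tail delta t.
Proof.
have /andP[d0 d1] := delta01; move=> s0 st.
rewrite ler_wpM2l ?(ltW d0) // lerD2r.
by rewrite ge0_ler_powR ?subr_ge0 ?(ltW d1) ?nnegrE ?addr_ge0 ?powR_ge0 ?lerD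
  ?(le_trans s0 st).
Qed.

Lemma T_tail_ge0 {t : R} : 0 <= t -> 0 <= T_tail delta t.
Proof. by move=> t0; rewrite -T_tail0 le_T_tail. Qed.

Lemma T_tail_le {t : R} :
  0 <= t -> T_tail delta t <= delta * powR t (1 - delta).
Proof.
have /andP[d0 d1] := delta01; move=> t0; rewrite ler_wpM2l ?(ltW d0) // lerBlDr.
by rewrite subadditive_powR ?powR_ge0 // subr_gt0 d1 lerBlDr lerDl ltW.
Qed.

Lemma T_tail_max0_le {t E : R} : t <= E -> 0 <= E ->
  T_tail delta (Num.max t 0) <= delta * powR E (1 - delta).
Proof.
have /andP[d0 d1] := delta01; move=> tE E0.
apply: le_trans (T_tail_le (max0_ge0 t)) _.
rewrite ler_wpM2l ?(ltW d0) // ge0_ler_powR ?subr_ge0 ?(ltW d1) //.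
  exact: max0_ge0.
by rewrite ge_max tE.
Qed.

Lemma T_DeltaE (a b z : R) : a <= b ->
  T_Delta delta a b z =
  clamp a b z - a + T_tail delta (Num.max (z - b) 0) -
  T_tail delta (Num.max (a - z) 0).
Proof.
move=> ab; have c2E : powR (delta * (1 - delta)) ((1 - delta) / delta) =
    powR (T_const delta) (1 - delta).
  by rewrite /T_const -powRrM; congr powR; rewrite mulrC mul1r.
rewrite /T_Delta c2E -/(T_const delta) /T_tail /clamp.
have [za|az] := ltP z a.
  have zb0 : z - b <= 0 by rewrite subr_le0 (le_trans (ltW za) ab).
  have az0 : 0 <= a - z by rewrite subr_ge0 ltW.
  by rewrite (min_l ab) (max_r zb0) (max_l az0) add0r; ring.
have az0 : a - z <= 0 by rewrite subr_le0.
have [zb|bz] := leP z b.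
  have zb0 : z - b <= 0 by rewrite subr_le0.
  by rewrite (max_r zb0) (max_r az0) add0r; ring.
have bz0 : 0 <= z - b by rewrite subr_ge0 ltW.
by rewrite (max_l bz0) (max_r az0) add0r; ring.
Qed.

Lemma nondecreasing_T_Delta (a b : R) :
  a <= b -> {homo T_Delta delta a b : x y / x <= y}.
Proof.
move=> ab x y xy; rewrite !T_DeltaE //.
have := nondecreasing_clamp a b _ _ xy.
have := le_T_tail (max0_ge0 (x - b)) (le_max2 (lerB xy (lexx b)) (lexx 0)).
have := le_T_tail (max0_ge0 (a - y)) (le_max2 (lerB (lexx a) xy) (lexx 0)).
lra.
Qed.

Lemma T_Delta_sub_le {a b x y E : R} : a <= b -> x <= y -> y <= b \/ a <= x ->
  a - x <= E -> y - b <= E -> 0 <= E ->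
  T_Delta delta a b y - T_Delta delta a b x <=
  clamp a b y - clamp a b x + delta * powR E (1 - delta).
Proof.
move=> ab xy yb_ax axE ybE E0; rewrite !T_DeltaE //.
case: yb_ax => [yb|ax].
- rewrite (max_r (_ : y - b <= 0)) ?(max_r (_ : x - b <= 0)) ?subr_le0 //;
    last exact: le_trans yb.
  have := T_tail_ge0 (max0_ge0 (a - y)); have := T_tail_max0_le axE E0.
  lra.
- rewrite (max_r (_ : a - y <= 0)) ?(max_r (_ : a - x <= 0)) ?subr_le0 //;
    last exact: le_trans xy.
  have := T_tail_ge0 (max0_ge0 (x - b)); have := T_tail_max0_le ybE E0.
  lra.
Qed.

End TransformDelta.

Definition consecutive {R : realDomainType} (P : seq R) (x y : R) : Prop :=
  [/\ x \in P, y \in P, x <= y & {in P, forall p, p <= x \/ y <= p}].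

Definition covering_radius {R : realType} (P : seq R) (l r : R) : R :=
  sup [set y | exists2 x, l <= x <= r & y = seqmin [seq `|x - p| | p <- P]].

Lemma covering_radius_ge {R : realType} (P : seq R) (l r z e : R) :
  P != [::] -> l <= z <= r -> {in P, forall p, e <= `|z - p|} ->
  e <= covering_radius P l r.
Proof.
move=> P0 /andP[lz zr] ze; rewrite /covering_radius.
set E := (X in sup X).
set dist := fun x => seqmin [seq `|x - p| | p <- P].
have hP : head 0 P \in P by case: (P) P0 => // p s _; exact: mem_head.
have supE : has_sup E.
  split; first by exists (dist z); exists z; rewrite ?lz.
  exists (r - l + `|l - head 0 P|) => _ [x /andP[lx xr] ->].
  apply: le_trans (seqmin_le _ _ (map_f (fun p => `|x - p|) hP)) _.
  apply: le_trans (ler_distD l _ _) _.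
  by rewrite ger0_norm ?subr_ge0 // lerD2r lerB.
have /mapP[p pP distE] : dist z \in [seq `|z - p| | p <- P].
  by apply: seqmin_mem; rewrite -size_eq0 size_map size_eq0.
apply: le_trans (ze p pP) _; rewrite -distE.
by apply: sup_upper_bound => //; exists z; rewrite ?lz.
Qed.

Lemma covering_radius_ge0 {R : realType} (P : seq R) (l r : R) :
  P != [::] -> l <= r -> 0 <= covering_radius P l r.
Proof.
by move=> P0 lr; apply: (@covering_radius_ge _ P l r l); rewrite ?lexx.
Qed.

Section ConsecutiveGap.
Context {R : realType} {P : seq R} {a b : R}.

Let PD := [seq p <- P | a <= p <= b].
Let M := covering_radius P ((a + seqmin PD) / 2) ((b + seqmax PD) / 2).
Let D := Num.max (a - seqmin P) (seqmax P - b).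
Let bound delta := 2 * M + delta * Num.max D (powR D (1 - delta)).

Lemma covering_radius_Delta'_ge0 : PD != [::] -> 0 <= M.
Proof.
move=> PD0; apply: covering_radius_ge0.
  by apply: contra PD0 => /eqP P0; rewrite /PD P0.
have := seqmin_le _ _ (seqmax_mem _ PD0).
have := seqmax_mem _ PD0; rewrite mem_filter => /andP[/andP[a_hi hi_b] _].
lra.
Qed.

(* The midpoint of the clamped pair lies in [Delta'] and is as far from [P] as
   the clamped points are from each other. *)
Lemma clamp_sub_le {x y : R} : PD != [::] -> consecutive P x y ->
  clamp a b y - clamp a b x <= 2 * M.
Proof.
move=> PD0 [xP yP xy adj].
have := seqmin_mem _ PD0; rewrite mem_filter => /andP[/andP[a_lo lo_b] loP].
have := seqmax_mem _ PD0; rewrite mem_filter => /andP[/andP[a_hi hi_b] _].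
have lo_le p : p \in P -> a <= p <= b -> seqmin PD <= p.
  by move=> pP pab; apply: seqmin_le; rewrite mem_filter pab.
have hi_ge p : p \in P -> a <= p <= b -> p <= seqmax PD.
  by move=> pP pab; apply: seqmax_ge; rewrite mem_filter pab.
set u := clamp a b x; set v := clamp a b y.
have [vu|uv] := leP v u; first by have := covering_radius_Delta'_ge0 PD0; lra.
have ab : a <= b by lra.
have au : a <= u by exact: clamp_ge.
have vb : v <= b by exact: clamp_le.
have xu : x <= u by apply: clamp_ge_of_lt; exact: lt_le_trans vb.
have vy : v <= y by apply: clamp_le_of_gt; exact: le_lt_trans uv.
have lo_v : seqmin PD <= v.
  apply: le_clamp => //; have [//|ylo] := leP (seqmin PD) y.
  have yab : a <= y <= b by apply/andP; lra.
  by have := lo_le y yP yab; lra.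
have u_hi : u <= seqmax PD.
  apply: ge_clamp => //; have [//|hix] := leP x (seqmax PD).
  have xab : a <= x <= b by apply/andP; lra.
  by have := hi_ge x xP xab; lra.
suff: (v - u) / 2 <= M by lra.
apply: (@covering_radius_ge _ P _ _ ((u + v) / 2)).
- by case: (P) loP.
- by apply/andP; lra.
- by move=> p /adj[px|yp]; [rewrite ger0_norm | rewrite ler0_norm]; lra.
Qed.

Lemma T_Delta_consecutive_le {delta x y : R} :
  0 < delta < 1 -> PD != [::] -> seqmin P <= a -> consecutive P x y ->
  `|T_Delta delta a b x - T_Delta delta a b y| <= bound delta.
Proof.
move=> delta01 PD0 P_min xy_cons; have [xP yP xy adj] := xy_cons.
have := seqmin_mem _ PD0; rewrite mem_filter => /andP[/andP[a_lo lo_b] loP].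
have ab : a <= b by exact: le_trans lo_b.
have ax_D : a - x <= D by rewrite le_max lerD2l lerN2 seqmin_le.
have yb_D : y - b <= D by rewrite le_max lerD2r seqmax_ge ?orbT.
have D_ge0 : 0 <= D by rewrite /D le_max subr_ge0 P_min.
have yb_ax : y <= b \/ a <= x by case: (adj _ loP) => ?; [right | left]; lra.
rewrite distrC ger0_norm ?subr_ge0 ?nondecreasing_T_Delta //.
apply: le_trans (T_Delta_sub_le delta01 ab xy yb_ax ax_D yb_D D_ge0) _.
apply: lerD; first exact: clamp_sub_le.
have /andP[/ltW delta_ge0 _] := delta01.
by rewrite ler_wpM2l // le_max lexx orbT.
Qed.

Lemma bound_ge0 delta : 0 <= delta -> PD != [::] -> seqmin P <= a ->
  0 <= bound delta.
Proof.
move=> delta_ge0 PD0 P_min; have := covering_radius_Delta'_ge0 PD0.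
have D_ge0 : 0 <= D by rewrite /D le_max subr_ge0 P_min.
have : 0 <= delta * Num.max D (powR D (1 - delta)).
  by rewrite mulr_ge0 // le_max D_ge0.
rewrite /bound; lra.
Qed.

End ConsecutiveGap.

Lemma horner_char_poly (R : comNzRingType) n (A : 'M[R]_n) (x : R) :
  (char_poly A).[x] = \det (x%:M - A).
Proof.
rewrite -horner_evalE -det_map_mx; congr (\det _); apply/matrixP => i j.
by rewrite !mxE /= horner_evalE !(hornerE, hornerMn).
Qed.

Lemma det1B_mul_col_row (R : comNzRingType) n (u : 'cV[R]_n) (v : 'rV[R]_n) :
  \det (1%:M - u *m v) = 1 - (v *m u) 0 0.
Proof.
pose B := block_mx (1%:M : 'M[R]_n) u v (1%:M : 'M_1).
have E1 : block_mx 1%:M 0 (- v) 1%:M *m B = block_mx 1%:M u 0 (1%:M - v *m u).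
  by rewrite mulmx_block !mul1mx !mul0mx !addr0 mulmx1 mulNmx addNr addrC.
have E2 : B *m block_mx 1%:M 0 (- v) 1%:M = block_mx (1%:M - u *m v) u 0 1%:M.
  by rewrite mulmx_block !mulmx1 !mulmx0 !add0r mul1mx mulmxN subrr.
have := congr1 determinant E1; have := congr1 determinant E2.
rewrite !det_mulmx !det_lblock !det_ublock !det1 !mul1r !mulr1 => <- ->.
by rewrite det_mx11 !mxE.
Qed.

Lemma eq_poly_nonzero (R : numDomainType) (p q : {poly R}) :
  (forall x, x != 0 -> p.[x] = q.[x]) -> p = q.
Proof.
move=> pq; apply/eqP; rewrite -subr_eq0; apply/negPn/negP => nz.
pose rs := [seq (i.+1)%:R : R | i <- iota 0 (size (p - q))].
suff: (size rs < size (p - q)%R)%N by rewrite size_map size_iota ltnn.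
apply: max_poly_roots nz _ _.
  apply/allP => _ /mapP[i _ ->].
  by rewrite /root hornerD hornerN pq ?subrr ?pnatr_eq0.
by rewrite map_inj_uniq ?iota_uniq // => i j /eqP; rewrite eqr_nat eqSS => /eqP.
Qed.

(* Off [x = 0], [x - L - c J = (x - L) (1 - (c / x) J)] because [L J = 0], and
   the rank-one factor has determinant [1 - c n / x]. *)
Lemma char_poly_add_const_mx {R : realFieldType} {n} {L : 'M[R]_n} (c : R) :
  L *m (const_mx 1 : 'M_n) = 0 ->
  'X * char_poly (L + c *: const_mx 1) = ('X - (c * n%:R)%:P) * char_poly L.
Proof.
move=> L1; apply: eq_poly_nonzero => x x0.
rewrite !hornerM hornerX hornerXsubC !horner_char_poly.
pose u : 'cV[R]_n := const_mx (c / x); pose v : 'rV[R]_n := const_mx 1.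
have uv : u *m v = (c / x) *: const_mx 1.
  by apply/matrixP => i j; rewrite !mxE big_ord1 !mxE mulr1.
have -> : x%:M - (L + c *: const_mx 1) = (x%:M - L) *m (1%:M - u *m v).
  rewrite uv mulmxBr mulmx1 mulmxBl mul_scalar_mx -scalemxAr L1 scaler0 subr0.
  by rewrite scalerA mulrCA divff // mulr1 opprD addrA.
rewrite det_mulmx det1B_mul_col_row.
have -> : (v *m u) 0 0 = n%:R * (c / x).
  rewrite !mxE (eq_bigr (fun=> c / x)) ?sumr_const ?card_ord ?mulr_natl //.
  by move=> i _; rewrite !mxE mul1r.
by field.
Qed.

Lemma double_sum_sqrB {R : comNzRingType} {I : Type} (r : seq I) (F : I -> R)
    (N : R) :
  (forall c : R, \sum_(i <- r) c = N * c) ->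
  \sum_(i <- r) \sum_(j <- r) (F i - F j) ^+ 2 =
  2 * N * \sum_(i <- r) F i ^+ 2 - 2 * (\sum_(i <- r) F i) ^+ 2.
Proof.
move=> sum_const.
transitivity (\sum_(i <- r) (N * F i ^+ 2 + \sum_(j <- r) F j ^+ 2 -
                               2 * F i * \sum_(j <- r) F j)).
  apply: eq_bigr => i _; rewrite -sum_const mulr_sumr -!big_split /=.
  by rewrite -sumrN -big_split /=; apply: eq_bigr => j _; ring.
rewrite !big_split /= sumrN sum_const -mulr_suml -!mulr_sumr; ring.
Qed.

Lemma sqr_sum_le {R : realFieldType} {I : Type} (r : seq I) (F : I -> R) :
  (\sum_(i <- r) F i) ^+ 2 <= (size r)%:R * \sum_(i <- r) F i ^+ 2.
Proof.
have sum_const (c : R) : \sum_(i <- r) c = (size r)%:R * c.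
  by rewrite big_const_seq count_predT iter_addr_0 mulr_natl.
have := double_sum_sqrB r F _ sum_const.
have : 0 <= \sum_(i <- r) \sum_(j <- r) (F i - F j) ^+ 2.
  by apply: sumr_ge0 => i _; apply: sumr_ge0 => j _; exact: sqr_ge0.
lra.
Qed.

Definition qform {R : comNzRingType} {n} (v : 'rV[R]_n) (B : 'M[R]_n) : R :=
  \sum_j (v *m B) 0 j * v 0 j.

Section QuadraticForm.
Context {R : comNzRingType} {n : nat} {v : 'rV[R]_n}.

Lemma qformDZ (B1 B2 : 'M[R]_n) c :
  qform v (B1 + c *: B2) = qform v B1 + c * qform v B2.
Proof.
rewrite /qform mulr_sumr -big_split; apply: eq_bigr => j _.
by rewrite mulmxDr -scalemxAr !mxE mulrDl mulrA.
Qed.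

Lemma qform_const1 : qform v (const_mx 1) = (\sum_i v 0 i) ^+ 2.
Proof.
rewrite /qform expr2 mulr_sumr; apply: eq_bigr => j _.
rewrite !mxE; congr (_ * _); apply: eq_bigr => i _; by rewrite mxE mulr1.
Qed.

Lemma qform_eigen {A : 'M[R]_n} {x} :
  v *m A = x *: v -> qform v A = x * \sum_j v 0 j ^+ 2.
Proof.
move=> vA; rewrite /qform vA mulr_sumr; apply: eq_bigr => j _.
by rewrite !mxE expr2 mulrA.
Qed.

End QuadraticForm.

Section Laplacian.
Context {R : realType} {n : nat} (W : 'M[R]_n).

Lemma laplacian_mul_const1 : laplacian W *m (const_mx 1 : 'M_n) = 0.
Proof.
apply/matrixP => i j; rewrite /laplacian mulmxBl mul_diag_mx !mxE.
under [X in _ - X = _]eq_bigr => k _ do rewrite mxE mulr1.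
by rewrite mulr1 subrr.
Qed.

Lemma qform_laplacian (v : 'rV[R]_n) : W^T = W ->
  2 * qform v (laplacian W) = \sum_i \sum_j W i j * (v 0 i - v 0 j) ^+ 2.
Proof.
move=> /matrixP W_sym.
have WE i j : W j i = W i j by have := W_sym i j; rewrite mxE.
have -> : qform v (laplacian W) =
    \sum_i \sum_j W i j * v 0 i ^+ 2 - \sum_i \sum_j W i j * (v 0 i * v 0 j).
  rewrite /qform /laplacian mulmxBr mul_mx_diag.
  under eq_bigr => j _ do rewrite !mxE mulrBl.
  rewrite sumrB; congr (_ - _).
    apply: eq_bigr => i _; rewrite mulr_sumr mulr_suml.
    by apply: eq_bigr => k _; ring.
  rewrite exchange_big; apply: eq_bigr => i _; rewrite mulr_suml.
  by apply: eq_bigr => j _; rewrite WE; ring.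
have sym_sqr :
    \sum_i \sum_j W i j * v 0 j ^+ 2 = \sum_i \sum_j W i j * v 0 i ^+ 2.
  rewrite exchange_big; apply: eq_bigr => i _.
  by apply: eq_bigr => j _; rewrite WE.
transitivity (\sum_i \sum_j W i j * v 0 i ^+ 2 +
  \sum_i \sum_j W i j * v 0 j ^+ 2 -
  2 * \sum_i \sum_j W i j * (v 0 i * v 0 j)); first by rewrite sym_sqr; ring.
rewrite -big_split mulr_sumr -sumrB; apply: eq_bigr => i _ /=.
by rewrite -big_split mulr_sumr -sumrB; apply: eq_bigr => j _ /=; ring.
Qed.

End Laplacian.

Section PathBounds.
Variable R : realFieldType.
Implicit Type Y : nat -> R.

Lemma sqr_sub_le_path Y n i j : (i <= n)%N -> (j <= n)%N ->
  (Y i - Y j) ^+ 2 <= n.+1%:R * \sum_(0 <= t < n) (Y t.+1 - Y t) ^+ 2.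
Proof.
wlog ij : i j / (i <= j)%N.
  move=> H i_n j_n; have [ij|/ltnW ji] := leqP i j; first exact: H.
  by rewrite -sqrrN opprB; apply: H.
move=> _ jn; set d := fun t => Y t.+1 - Y t.
have sum_ge0 m p : 0 <= \sum_(m <= t < p) d t ^+ 2.
  by apply: sumr_ge0 => t _; exact: sqr_ge0.
have sub_sum : \sum_(i <= t < j) d t ^+ 2 <= \sum_(0 <= t < n) d t ^+ 2.
  rewrite (big_cat_nat (leq0n i) (leq_trans ij jn)) (big_cat_nat ij jn) /=.
  by have := sum_ge0 0%N i; have := sum_ge0 j n; lra.
have ji_n : (j - i)%:R <= n.+1%:R :> R by rewrite ler_nat; lia.
rewrite -sqrrN opprB -(telescope_sumr _ ij).
apply: le_trans (sqr_sum_le _ _) _; rewrite size_iota.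
exact: ler_pM (ler0n _ _) (sum_ge0 i j) ji_n sub_sum.
Qed.

Lemma double_sum_sqr_sub_le_path Y n :
  \sum_(i < n.+1) \sum_(j < n.+1) (Y i - Y j) ^+ 2 <=
  n.+1%:R ^+ 3 * \sum_(0 <= t < n) (Y t.+1 - Y t) ^+ 2.
Proof.
set S := \sum_(0 <= t < n) _.
apply: le_trans (_ : \sum_(i < n.+1) \sum_(j < n.+1) n.+1%:R * S <= _).
  by do 2!apply: ler_sum => ? _; apply: sqr_sub_le_path; rewrite -ltnS.
rewrite !sumr_const !card_ord.
suff -> : n.+1%:R * S *+ n.+1 *+ n.+1 = n.+1%:R ^+ 3 * S by [].
ring.
Qed.

End PathBounds.

Lemma path_energy_le {R : realFieldType} {n} {W : 'M[R]_n} {w : R}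
    {f : 'I_n -> 'I_n} (v : 'rV[R]_n) :
  (forall i j, 0 <= W i j) -> 0 <= w -> injective f ->
  (forall m m' : 'I_n, val m' = (val m).+1 -> w <= W (f m) (f m')) ->
  w * \sum_i \sum_j (v 0 i - v 0 j) ^+ 2 <=
  n%:R ^+ 3 * \sum_i \sum_j W i j * (v 0 i - v 0 j) ^+ 2.
Proof.
case: n => [|n] in W f v *; first by rewrite !big_ord0 !mulr0.
move=> W_ge0 w_ge0 f_inj f_path.
have reindex (F : 'I_n.+1 -> 'I_n.+1 -> R) :
    \sum_i \sum_j F i j = \sum_i \sum_j F (f i) (f j).
  by rewrite (reindex_inj f_inj); apply: eq_bigr => i _; exact: reindex_inj.
pose Y t := v 0 (f (inord t)).
have Yf (m : 'I_n.+1) : v 0 (f m) = Y m by rewrite /Y inord_val.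
set S := \sum_(0 <= t < n) (Y t.+1 - Y t) ^+ 2.
have upper : \sum_i \sum_j (v 0 i - v 0 j) ^+ 2 <= n.+1%:R ^+ 3 * S.
  rewrite reindex; under eq_bigr => i _ do under eq_bigr => j _ do rewrite !Yf.
  exact: double_sum_sqr_sub_le_path.
have lower : w * S <= \sum_i \sum_j W i j * (v 0 i - v 0 j) ^+ 2.
  have term_ge0 i j : 0 <= W i j * (v 0 i - v 0 j) ^+ 2.
    by rewrite mulr_ge0 ?sqr_ge0.
  rewrite reindex big_ord_recr /= -[X in X <= _]addr0 lerD ?sumr_ge0 //.
  rewrite /S big_mkord mulr_sumr; apply: ler_sum => i _.
  rewrite (bigD1 (lift ord0 i)) //= -[X in X <= _]addr0 lerD ?sumr_ge0 //.
  rewrite !Yf /= -sqrrN opprB ler_wpM2r ?sqr_ge0 //.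
  exact: f_path.
apply: le_trans (ler_wpM2l w_ge0 upper) _.
by rewrite mulrCA ler_wpM2l ?exprn_ge0.
Qed.

Lemma eigenvalue_ge_of_qform (R : realFieldType) n (A : 'M[R]_n) (mu x : R) :
  (forall v : 'rV[R]_n, mu * \sum_j v 0 j ^+ 2 <= qform v A) ->
  eigenvalue A x -> mu <= x.
Proof.
move=> A_ge /eigenvalueP[v vA v_neq0]; have := A_ge v.
rewrite (qform_eigen vA) ler_pM2r // lt_def sumr_ge0 ?andbT => [|j _];
  last exact: sqr_ge0.
apply: contra v_neq0 => /eqP sum_eq0; apply/eqP/rowP => j; rewrite mxE.
apply/eqP; rewrite -sqrf_eq0 (psumr_eq0P _ sum_eq0) // => i _.
exact: sqr_ge0.
Qed.

(* The energy bound gives [Q(v) >= mu (n Sq - Sm^2)] with [Sq = sum v_i^2] and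
   [Sm = sum v_i]; the [J]-term adds [(mu / n) Sm^2], which leaves the slack
   [mu (n - 1) / n (n Sq - Sm^2) >= 0]. *)
Lemma qform_laplacian_shift_ge {R : realType} {n} {W : 'M[R]_n} {mu : R}
    {v : 'rV[R]_n} :
  (0 < n)%N -> W^T = W -> 0 <= mu ->
  mu * \sum_i \sum_j (v 0 i - v 0 j) ^+ 2 <=
    \sum_i \sum_j W i j * (v 0 i - v 0 j) ^+ 2 ->
  mu * \sum_j v 0 j ^+ 2 <= qform v (laplacian W + (mu / n%:R) *: const_mx 1).
Proof.
move=> n_gt0 W_sym mu_ge0 energy; rewrite qformDZ qform_const1.
have sum_const (c : R) : \sum_(i < n) c = n%:R * c.
  by rewrite sumr_const card_ord mulr_natl.
have := double_sum_sqrB (index_enum 'I_n) (fun i : 'I_n => v 0 i) _ sum_const.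
set Sq := \sum_j v 0 j ^+ 2; set Sm := \sum_i v 0 i => sqrB.
have CS : Sm ^+ 2 <= n%:R * Sq.
  have : 0 <= \sum_i \sum_j (v 0 i - v 0 j) ^+ 2 :> R.
    by do 2!apply: sumr_ge0 => ? _; exact: sqr_ge0.
  by rewrite sqrB; lra.
rewrite sqrB -(qform_laplacian W v W_sym) in energy.
set Q := qform v (laplacian W) in energy *.
have n_ge1 : 1 <= n%:R :> R by rewrite ler1n.
have slack : 0 <= mu * (n%:R - 1) / n%:R * (n%:R * Sq - Sm ^+ 2).
  by rewrite !mulr_ge0 ?invr_ge0 //; lra.
have -> : mu * Sq = mu * (n%:R * Sq - Sm ^+ 2) + mu / n%:R * Sm ^+ 2 -
                    mu * (n%:R - 1) / n%:R * (n%:R * Sq - Sm ^+ 2).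
  by field; rewrite pnatr_eq0 -lt0n.
lra.
Qed.

Lemma second_root_ge {R : realDomainType} {p : {poly R}} {s : seq R} {mu : R} :
  0 < mu -> (forall x, root p x -> mu <= x) ->
  sorted <=%R s -> (1 < size s)%N ->
  'X * p = ('X - mu%:P) * \prod_(x <- s) ('X - x%:P) -> mu <= s`_1.
Proof.
move=> mu_gt0 p_roots; case: s => [|s0 [|s1 s]] //= /andP[s01 _] _ E.
rewrite leNgt; apply/negP => s1_lt.
have small x : x \in [:: s0, s1 & s] -> x < mu -> x = 0.
  move=> xs x_lt; have : root ('X * p) x.
    by rewrite E rootM root_prod_XsubC xs orbT.
  by rewrite rootM rootX => /orP[/eqP //|/p_roots]; rewrite leNgt x_lt.
have s1_0 : s1 = 0 by apply: small; rewrite // !inE eqxx orbT.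
have s0_0 : s0 = 0 by apply: small; rewrite ?mem_head // (le_lt_trans s01).
move: E; rewrite s0_0 s1_0 !big_cons subr0 mulrCA.
move=> /(mulfI (negbT (polyX_eq0 _))) pE.
have := p_roots 0; rewrite pE !rootM rootX eqxx !orbT leNgt mu_gt0.
by move=> /(_ isT).
Qed.

Theorem laplacian_second_eigenvalue_ge {R : realType} {n} {W : 'M[R]_n} {w : R}
    {f : 'I_n -> 'I_n} {s : seq R} :
  (1 < n)%N -> W^T = W -> (forall i j, 0 <= W i j) -> 0 < w -> injective f ->
  (forall m m' : 'I_n, val m' = (val m).+1 -> w <= W (f m) (f m')) ->
  sorted_eigenvalues (laplacian W) s -> (n%:R ^+ 3)^-1 * w <= s`_1.
Proof.
move=> n_gt1 W_sym W_ge0 w_gt0 f_inj f_path [s_sorted charE].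
have n_gt0 : 0 < n%:R :> R by rewrite ltr0n ltnW.
have n3_gt0 : 0 < n%:R ^+ 3 :> R by rewrite exprn_gt0.
set mu := (n%:R ^+ 3)^-1 * w.
have mu_gt0 : 0 < mu by rewrite mulr_gt0 ?invr_gt0.
have := char_poly_add_const_mx (mu / n%:R) (laplacian_mul_const1 W).
rewrite divfK ?gt_eqF // charE => E.
apply: (second_root_ge mu_gt0 _ s_sorted _ E); last first.
  have := size_char_poly (laplacian W).
  by rewrite charE size_prod_XsubC => -[->].
move=> x; rewrite -eigenvalue_root_char; apply: eigenvalue_ge_of_qform => v.
apply: (qform_laplacian_shift_ge (ltnW n_gt1) W_sym (ltW mu_gt0)).
have := path_energy_le v W_ge0 (ltW w_gt0) f_inj f_path.
by move=> energy; rewrite /mu -mulrA ler_pdivrMl.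
Qed.

Lemma consecutive_path {R : realDomainType} (P : seq R) : uniq P ->
  exists2 f : 'I_(size P) -> 'I_(size P), injective f &
    forall m m' : 'I_(size P), val m' = (val m).+1 ->
      consecutive P P`_(f m) P`_(f m').
Proof.
move=> P_uniq; pose q := sort <=%R P.
have q_sorted : sorted <=%R q by apply: sort_sorted; exact: le_total.
have q_size : size q = size P by rewrite size_sort.
have q_mem : q =i P by exact: mem_sort.
have q_uniq : uniq q by rewrite sort_uniq.
have q_le i j : (i <= j)%N -> (j < size P)%N -> q`_i <= q`_j.
  move=> ij jn; apply: (sorted_leq_nth le_trans lexx 0 q_sorted) => //.
    by rewrite inE q_size (leq_ltn_trans ij jn).
  by rewrite inE q_size.
have qP (m : 'I_(size P)) : q`_m \in P by rewrite -q_mem mem_nth ?q_size.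
have f_lt (m : 'I_(size P)) : (index (q`_m)%R P < size P)%N.
  by rewrite index_mem.
pose f m := Ordinal (f_lt m).
have Pf m : P`_(f m) = q`_m by rewrite nth_index.
exists f => [m m' fmm'|m m' mm'].
  apply/val_inj/eqP; rewrite -(nth_uniq 0 _ _ q_uniq) ?q_size ?ltn_ord //.
  by rewrite -!Pf fmm'.
rewrite !Pf; split; rewrite ?qP ?q_le ?ltn_ord ?mm' ?leqnSn //.
move=> p pP; have pq : p = q`_(index p q) by rewrite nth_index ?q_mem.
have ip : (index p q < size P)%N by rewrite -q_size index_mem q_mem.
by have [ipm|mip] := leqP (index p q) m; [left | right]; rewrite pq q_le ?mm'.
Qed.

Theorem lemma2 (R : realType) (k : R -> R) (sigma delta : R) (P : seq R)
    (a b : R) :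
  (forall x, 0 <= x -> 0 < k x) ->
  (forall x y, 0 <= x -> x <= y -> k y <= k x) ->
  0 < sigma -> 0 < delta -> delta <= 1 / 2 ->
  uniq P ->
  a < b ->
  (2 <= size [seq x <- P | (a <= x <= b)%R])%N ->
  seqmin P <= a -> b <= seqmax P ->
  let PD := [seq x <- P | a <= x <= b] in
  let a' := (a + seqmin PD) / 2 in
  let b' := (b + seqmax PD) / 2 in
  let M := sup [set y | exists2 x, a' <= x <= b' &
                          y = seqmin [seq `|x - p| | p <- P]] in
  let D := Num.max (a - seqmin P) (seqmax P - b) in
  let C := Num.max D (powR D (1 - delta)) in
  forall s : seq R,
    sorted_eigenvalues (laplacian (affinity k sigma delta a b P)) s ->
    ((size P)%:R ^+ 3)^-1 * k ((2 * M + delta * C) / sigma) <= s`_1.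
Proof.
move=> k_gt0 k_anti sigma_gt0 delta_gt0 delta_le P_uniq ab PD_size P_min _.
move=> PD a' b' M D C s eig.
have PD0 : PD != [::] by rewrite -size_eq0 -lt0n (leq_trans _ PD_size).
have n_gt1 : (1 < size P)%N.
  by apply: leq_trans PD_size _; rewrite size_filter count_size.
have delta01 : 0 < delta < 1 by apply/andP; split; lra.
have dist_ge0 (u v : R) : 0 <= `|u - v| / sigma.
  exact: divr_ge0 (normr_ge0 _) (ltW sigma_gt0).
have B_ge0 : 0 <= (2 * M + delta * C) / sigma.
  apply: divr_ge0 (ltW sigma_gt0).
  exact: (bound_ge0 _ (ltW delta_gt0) PD0 P_min).
have [f f_inj f_cons] := consecutive_path P P_uniq.
apply: (laplacian_second_eigenvalue_ge n_gt1 _ _ (k_gt0 _ B_ge0) f_inj _ eig).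
- by apply/matrixP => i j; rewrite !mxE distrC.
- by move=> i j; rewrite /affinity mxE ltW ?k_gt0.
move=> m m' mm'; rewrite /affinity mxE; apply: k_anti => //.
rewrite ler_pM2r ?invr_gt0 //.
exact: T_Delta_consecutive_le delta01 PD0 P_min (f_cons m m' mm').
Qed.
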